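(* Let $\sigma\subseteq N_\mathbb{Q}$ be a pointed cone, let $\partial_{e,p}$ ($e\in M$, $p\in N$) be a non-zero homogeneous vector field on $X_\sigma$, and let $\tau\subseteq\sigma$ be a face. Then $\partial_{e,p}$ vanishes on the orbit closure $\overline{\mathcal{O}(\tau)}$ (i.e. $\partial_{e,p}(\mathbb{C}[\sigma^\vee_M])\subseteq I(\tau)$) if and only if: if $\partial_{e,p}$ is of type I: $p\in\mathrm{span}\,\tau$ or $\langle e,\rho\rangle>0$ for some $\rho\in\tau(1)$; if $\partial_{e,p}$ is of type II: $\langle e,\rho\rangle>0$ for some $\rho\in\tau(1)$.
   Context: $N$ is a lattice with dual $M$, pairing $\langle m,p\rangle$. $\sigma\subseteq N_\mathbb{Q}$ is a strongly convex rational polyhedral cone, $\sigma^\vee_M=\sigma^\vee\cap M$, $X_\sigma=\mathrm{Spec}\,\mathbb{C}[\sigma^\vee_M]$; for a face $\tau$, $\tau(1)$ is the set of primitive ray generators of $\tau$, $\mathcal{O}(\tau)$ is the corresponding torus orbit, and the ideal of its closure is $I(\tau)=\bigoplus_{m\in\sigma^\vee_M\setminus\tau^\perp}\mathbb{C}\chi^m$. $\partial_{e,p}$ is the derivation $\chi^m\mapsto\langle m,p\rangle\chi^{m+e}$; a homogeneous vector field on $X_\sigma$ is such a $\partial_{e,p}$ preserving $\mathbb{C}[\sigma^\vee_M]$, and (for $p\ne0$) this happens exactly when it is of Type I ($e\in\sigma^\vee_M$) or Type II (there is a ray $\rho_e\in\sigma(1)$ with $p\in\mathbb{Z}\rho_e$,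 $\langle e,\rho_e\rangle=-1$, $\langle e,\rho\rangle\ge0$ for all other $\rho\in\sigma(1)$). *)

(* Lattice N = Z^n and M = Z^n as row vectors 'rV[int]_n,
   pairing <m,p> = sum_i m_i p_i. *)
From mathcomp Require Import all_boot all_order all_algebra.
Set Implicit Arguments. Unset Strict Implicit. Unset Printing Implicit Defensive.
Import Order.TTheory GRing.Theory Num.Theory.
Local Open Scope ring_scope.

Definition lat (n : nat) := 'rV[int]_n.

Definition pairing n (m p : lat n) : int := \sum_(i < n) m 0 i * p 0 i.

Definition toQ n (v : lat n) : 'rV[rat]_n := map_mx (fun z : int => z%:~R) v.

Definition in_cone n (rays : seq (lat n)) (v : 'rV[rat]_n) : Prop :=
  exists c : lat n -> rat, (forall r, 0 <= c r) /\
    v = \sum_(r <- rays) c r *: toQ r.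

Definition primitive n (v : lat n) : Prop :=
  v != 0 /\ forall (k : int) (w : lat n), v = k *: w -> k = 1 \/ k = -1.

(* [rays] is exactly sigma(1) for the strongly convex rational cone
   sigma = cone(rays): distinct primitive vectors, none redundant, sigma pointed *)
Definition ray_data n (rays : seq (lat n)) : Prop :=
  [/\ uniq rays,
      forall r, r \in rays -> primitive r,
      forall r, r \in rays -> ~ in_cone (rem r rays) (toQ r) &
      forall v, in_cone rays v -> in_cone rays (- v) -> v = 0].

Definition in_dual n (rays : seq (lat n)) (m : lat n) : Prop :=
  forall r, r \in rays -> 0 <= pairing m r.

(* tau(1) for the face tau = sigma cap u^perp, u in sigma^vee_M
   (every face of sigma arises this way) *)
Definition face_rays n (rays : seq (lat n)) (u : lat n) : seq (lat n) :=
  [seq r <- rays | pairing u r == 0].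

Definition in_perp n (taurays : seq (lat n)) (m : lat n) : Prop :=
  forall r, r \in taurays -> pairing m r = 0.

Definition in_span n (taurays : seq (lat n)) (p : lat n) : Prop :=
  exists c : lat n -> rat, toQ p = \sum_(r <- taurays) c r *: toQ r.

(* d_{e,p} preserves C[sigma^vee_M]: d(chi^m) = <m,p> chi^(m+e) *)
Definition homogeneous n (rays : seq (lat n)) (e p : lat n) : Prop :=
  forall m, in_dual rays m -> pairing m p = 0 \/ in_dual rays (m + e).

(* the term c * chi^m' (c an integer coefficient, viewed in C) lies in
   I(tau) = span { chi^m | m in sigma^vee_M \ tau^perp } *)
Definition term_in_ideal n (rays taurays : seq (lat n)) (c : int) (m' : lat n)
  : Prop := c = 0 \/ (in_dual rays m' /\ ~ in_perp taurays m').

(* d_{e,p}(C[sigma^vee_M]) subset I(tau); by linearity it suffices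
   (and is necessary) that the image of each monomial chi^m lies in I(tau) *)
Definition vanishes_on_orbit n (rays taurays : seq (lat n)) (e p : lat n) : Prop :=
  forall m, in_dual rays m -> term_in_ideal rays taurays (pairing m p) (m + e).

Definition typeI n (rays : seq (lat n)) (e p : lat n) : Prop := in_dual rays e.

Definition typeII n (rays : seq (lat n)) (e p : lat n) : Prop :=
  exists2 re, re \in rays &
    [/\ exists k : int, p = k *: re,
        pairing e re = -1 &
        forall r, r \in rays -> r != re -> 0 <= pairing e r].

From mathcomp Require Import all_boot all_order all_algebra.
From mathcomp Require Import zify.
Import Order.TTheory GRing.Theory Num.Theory.
Set Implicit Arguments. Unset Strict Implicit. Unset Printing Implicit Defensive.
Local Open Scope ring_scope.

(* Write tau for the face sigma cap u^perp.  By homogeneity, d_{e,p} vanishes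
   on the orbit closure iff <m,p> != 0 forces m + e outside tau^perp for every
   m in sigma^vee_M.  A ray of tau on which e is positive makes this automatic;
   in type I so does p in span tau, since then <m+e,.> = 0 on tau forces
   <m,p> = 0.  Conversely, if e <= 0 on tau, shifting by a large multiple k u
   of u moves any w with w >= 0 on tau into sigma^vee_M without changing it on
   tau.  In type II, m = k u - e has m + e in tau^perp but <m,rho_e> > 0, so
   <m,p> != 0.  In type I, e lies in tau^perp; if p were outside span tau,
   some w in tau^perp has <w,p> != 0, and the two shifts k u and k u + w have
   different pairings with p although both are perpendicular to tau after
   adding e. *)


Section Pairing.
Variable n : nat.
Implicit Types (m p : lat n) (s : seq (lat n)).

Lemma pairingDl m1 m2 p : pairing (m1 + m2) p = pairing m1 p + pairing m2 p.
Proof. by rewrite /pairing -big_split; apply: eq_bigr => i _; rewrite !mxE mulrDl. Qed.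

Lemma pairingZl (k : int) m p : pairing (k *: m) p = k * pairing m p.
Proof. by rewrite /pairing mulr_sumr; apply: eq_bigr => i _; rewrite !mxE mulrA. Qed.

Lemma pairingZr (k : int) m p : pairing m (k *: p) = k * pairing m p.
Proof. by rewrite /pairing mulr_sumr; apply: eq_bigr => i _; rewrite !mxE mulrCA. Qed.

Lemma pairingNl m p : pairing (- m) p = - pairing m p.
Proof. by rewrite -scaleN1r pairingZl mulN1r. Qed.

Lemma in_perpD s m1 m2 : in_perp s m1 -> in_perp s m2 -> in_perp s (m1 + m2).
Proof. by move=> perp1 perp2 r r_s; rewrite pairingDl perp1 ?perp2 ?addr0. Qed.

Lemma in_dualZ s (k : int) m : 0 <= k -> in_dual s m -> in_dual s (k *: m).
Proof. by move=> k_ge0 dual_m r r_s; rewrite pairingZl mulr_ge0 ?dual_m. Qed.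

Lemma in_dual_sub s t m : {subset t <= s} -> in_dual s m -> in_dual t m.
Proof. by move=> sub_ts dual_m r /sub_ts; apply: dual_m. Qed.

Lemma pairing_toQ m p : (pairing m p)%:~R = (toQ p *m (toQ m)^T) 0 0.
Proof.
rewrite /pairing rmorph_sum !mxE; apply: eq_bigr => i _.
by rewrite !mxE rmorphM mulrC.
Qed.

Lemma in_span_perp s m p : in_span s p -> in_perp s m -> pairing m p = 0.
Proof.
move=> [c pc] perp_m; apply/eqP; rewrite -(intr_eq0 rat) pairing_toQ pc.
rewrite mulmx_suml summxE big_seq big1 // => r r_s.
by rewrite -scalemxAl mxE -pairing_toQ perp_m // mulr0.
Qed.

Lemma lat_scale_rat (x : 'rV[rat]_n) :
  exists2 d : rat, d != 0 & exists w : lat n, toQ w = d *: x.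
Proof.
exists (\prod_(i < n) (denq (x 0 i))%:~R).
  by apply/prodf_neq0 => i _; rewrite intr_eq0 denq_neq0.
exists (\row_i (numq (x 0 i) * \prod_(k < n | k != i) denq (x 0 k))).
apply/rowP => i; rewrite !mxE rmorphM rmorph_prod /= numqE [in RHS](bigD1 i) //=.
by rewrite [RHS]mulrC mulrA.
Qed.

Lemma in_span_or_separated s p : uniq s ->
  in_span s p \/ exists2 w, in_perp s w & pairing w p != 0.
Proof.
move=> uniq_s; pose A := \matrix_(i < size s) toQ (nth 0 s i).
have [/submxP [D pD]|] := boolP (toQ p <= A)%MS.
  left; exists (fun r => \sum_(i < size s | nth 0 s i == r) D 0 i).
  rewrite pD mulmx_sum_row (big_nth 0) big_mkord; apply: eq_bigr => i _.
  by rewrite rowK (big_pred1 i) // => k /=; rewrite nth_uniq.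
rewrite submxE => /matrix0Pn [i [j pj_neq0]]; right.
have [d d_neq0 [w toQw]] := lat_scale_rat (col j (cokermx A))^T.
have pairing_w v : (pairing w v)%:~R = d * (toQ v *m cokermx A) 0 j.
  rewrite pairing_toQ toQw linearZ /= trmxK -scalemxAr mxE !mxE.
  by congr (_ * _); apply: eq_bigr => k _; rewrite !mxE.
exists w => [r r_s|].
  have r_row : toQ r = row (Ordinal (etrans (index_mem r s) r_s)) A.
    by rewrite rowK /= nth_index.
  apply/eqP; rewrite -(intr_eq0 rat) pairing_w r_row -row_mul mulmx_coker.
  by rewrite !mxE mulr0.
by rewrite -(intr_eq0 rat) pairing_w mulf_neq0 // -(ord1 i).
Qed.

Lemma not_in_perp_addr s m e : in_dual s m ->
  (exists2 r, r \in s & 0 < pairing e r) -> ~ in_perp s (m + e).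
Proof.
move=> dual_m [r r_s e_pos] /(_ r r_s)/eqP; rewrite pairingDl.
by rewrite gt_eqF // ltr_wpDl ?dual_m.
Qed.

End Pairing.

Section VanishingCriterion.
Variables (n : nat) (rays taurays : seq (lat n)) (e p : lat n).

Lemma vanishes_pairing_eq0 m : vanishes_on_orbit rays taurays e p ->
  in_dual rays m -> in_perp taurays (m + e) -> pairing m p = 0.
Proof. by move=> van dual_m perp_me; case: (van m dual_m) => // [[_]]. Qed.

Lemma vanishes_on_orbitP : homogeneous rays e p ->
  vanishes_on_orbit rays taurays e p <->
  forall m, in_dual rays m -> pairing m p != 0 -> ~ in_perp taurays (m + e).
Proof.
move=> hom; split=> [van m dual_m mp_neq0 perp_me|].
  by rewrite (vanishes_pairing_eq0 van dual_m perp_me) eqxx in mp_neq0.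
move=> not_perp m dual_m; have [->|mp_neq0] := eqVneq (pairing m p) 0; first by left.
right; split; last exact: not_perp.
by case: (hom m dual_m) => // /eqP; rewrite (negbTE mp_neq0).
Qed.

Lemma vanishes_of_pos_ray : homogeneous rays e p -> {subset taurays <= rays} ->
  (exists2 r, r \in taurays & 0 < pairing e r) ->
  vanishes_on_orbit rays taurays e p.
Proof.
move=> hom sub_tau e_pos; apply/vanishes_on_orbitP => // m dual_m _.
by apply: not_in_perp_addr e_pos; apply: in_dual_sub dual_m.
Qed.

Lemma vanishes_of_in_span : homogeneous rays e p -> {subset taurays <= rays} ->
  in_dual taurays e -> in_span taurays p -> vanishes_on_orbit rays taurays e p.
Proof.
move=> hom sub_tau dual_e span_p; apply/vanishes_on_orbitP => // m dual_m.
move=> /eqP + perp_me; apply; apply: (in_span_perp span_p) => r r_tau.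
have /eqP := perp_me r r_tau; rewrite pairingDl paddr_eq0 ?dual_e //.
  by case/andP=> /eqP.
exact: dual_m (sub_tau r r_tau).
Qed.

End VanishingCriterion.

Section Face.
Variables (n : nat) (rays : seq (lat n)) (u : lat n).
Hypothesis u_dual : in_dual rays u.
Local Notation tau := (face_rays rays u).

Lemma face_raysP r : reflect (r \in rays /\ pairing u r = 0) (r \in tau).
Proof. by rewrite mem_filter andbC; apply: (iffP andP) => -[? /eqP]. Qed.

Lemma face_rays_sub : {subset tau <= rays}.
Proof. by move=> r /face_raysP []. Qed.

Lemma in_perp_face_scale (k : int) : in_perp tau (k *: u).
Proof. by move=> r /face_raysP [_ ur0]; rewrite pairingZl ur0 mulr0. Qed.

Lemma in_dual_face_shift w :
  in_dual tau w -> in_dual rays ((\sum_(r <- rays) `|pairing w r|) *: u + w).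
Proof.
move=> w_dual r r_rays; set k := \sum_(_ <- _) _.
have [ur0|ur_neq0] := eqVneq (pairing u r) 0.
  by rewrite pairingDl pairingZl ur0 mulr0 add0r w_dual //; apply/face_raysP.
have ur_ge1 : 1 <= pairing u r by rewrite -gtz0_ge1 lt_neqAle eq_sym ur_neq0 u_dual.
have wr_le_k : `|pairing w r| <= k.
  by rewrite /k (big_rem r) //= lerDl sumr_ge0.
have k_le : k <= k * pairing u r by rewrite ler_peMr // (le_trans _ wr_le_k).
have : - pairing w r <= `|pairing w r| by rewrite -normrN ler_norm.
rewrite pairingDl pairingZl; lia.
Qed.

Lemma typeI_vanishes e p : uniq rays -> typeI rays e p ->
  vanishes_on_orbit rays tau e p ->
  in_span tau p \/ exists2 r, r \in tau & 0 < pairing e r.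
Proof.
move=> uniq_rays e_dual van.
have [/hasP|/hasPn e_npos] := boolP (has (fun r => 0 < pairing e r) tau).
  by right.
left; have e_perp : in_perp tau e.
  move=> r r_tau; apply/eqP; rewrite eq_le leNgt e_npos //=.
  exact: e_dual (face_rays_sub r_tau).
have [//|[w w_perp wp_neq0]] :=
  in_span_or_separated p (filter_uniq (fun r => pairing u r == 0) uniq_rays).
set k := \sum_(r <- rays) `|pairing w r|.
have ku_perp : in_perp tau (k *: u + e) by apply: in_perpD (in_perp_face_scale k) e_perp.
have ku_eq0 : pairing (k *: u) p = 0.
  exact: vanishes_pairing_eq0 van (in_dualZ (sumr_ge0 _ _) u_dual) ku_perp.
have w_dual : in_dual tau w by move=> r /w_perp ->.
have := vanishes_pairing_eq0 van (in_dual_face_shift w_dual).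
rewrite pairingDl ku_eq0 add0r addrAC => /(_ (in_perpD ku_perp w_perp))/eqP.
by rewrite (negbTE wp_neq0).
Qed.

Lemma typeII_vanishes e p : p != 0 -> typeII rays e p ->
  vanishes_on_orbit rays tau e p -> exists2 r, r \in tau & 0 < pairing e r.
Proof.
move=> p_neq0 [re re_rays [[c p_def] e_re _]] van.
have [/hasP //|/hasPn e_npos] := boolP (has (fun r => 0 < pairing e r) tau).
have c_neq0 : c != 0 by apply: contraNneq p_neq0 => c0; rewrite p_def c0 scale0r.
have Ne_dual : in_dual tau (- e).
  by move=> r /e_npos; rewrite pairingNl oppr_ge0 leNgt.
set k := \sum_(r <- rays) `|pairing (- e) r|.
have := vanishes_pairing_eq0 van (in_dual_face_shift Ne_dual).
rewrite addrNK p_def pairingZr pairingDl pairingZl pairingNl e_re opprK.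
move=> /(_ (in_perp_face_scale k))/eqP; rewrite mulf_eq0 (negbTE c_neq0) /=.
by rewrite gt_eqF // ltr_wpDl ?ltr01 // mulr_ge0 ?u_dual //; apply: sumr_ge0.
Qed.

End Face.

Theorem lemma3p3 (n : nat) (rays : seq (lat n)) (e p u : lat n) :
  ray_data rays ->
  p != 0 ->
  homogeneous rays e p ->
  in_dual rays u ->
  (typeI rays e p ->
     (vanishes_on_orbit rays (face_rays rays u) e p <->
      in_span (face_rays rays u) p \/
      exists2 r, r \in face_rays rays u & 0 < pairing e r)) /\
  (typeII rays e p ->
     (vanishes_on_orbit rays (face_rays rays u) e p <->
      exists2 r, r \in face_rays rays u & 0 < pairing e r)).
Proof.
move=> [uniq_rays _ _ _] p_neq0 hom u_dual.
have tau_sub := @face_rays_sub n rays u.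
split=> [e_dual|e_typeII]; split.
- exact: typeI_vanishes.
- case=> [span_p|e_pos]; last exact: vanishes_of_pos_ray.
  apply: vanishes_of_in_span => // r /tau_sub; exact: e_dual.
- exact: typeII_vanishes.
- exact: vanishes_of_pos_ray.
Qed.
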